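(* Let $S,T$ be $\mathbb{G}$-stopping times and let $T'=T_{\{S\le T<\infty\}}$. Suppose that $[S,T)\in\mathcal{L}^o$, that $[T']\in\mathcal{L}^o$, and that the process $\mathbf{1}_{[T']}$ satisfies the optional splitting formula on $[S,T]$. Then $[S,T]\in\mathcal{L}^o$.
   Context: Let $(\Omega,\mathcal{A},\mathbb{Q})$ be a probability space with a right-continuous filtration $\mathbb{F}=(\mathcal{F}_t)_{t\ge0}$ such that $\mathcal{F}_0$ contains $\mathcal{N}^{\mathcal{F}_\infty}$, where for a $\sigma$-algebra $\mathcal{T}\subset\mathcal{A}$, $\mathcal{N}^{\mathcal{T}}$ denotes the $\sigma$-algebra generated by all subsets of $\mathcal{T}$-measurable $\mathbb{Q}$-null sets. Let $\tau$ be a random variable with values in $[0,\infty]$, let $\mathcal{N}=\mathcal{N}^{\sigma(\tau)\vee\mathcal{F}_\infty}$, and let $\mathbb{G}=(\mathcal{G}_t)_{t\ge0}$ with $\mathcal{G}_t=\mathcal{N}\vee\bigcap_{s>t}(\mathcal{F}_s\vee\sigma(\tau\wedge s))$. Identities are understood up to $\mathcal{N}$-measurable $\mathbb{Q}$-null sets. For a function $Y''$ on $[0,\infty]\times(\mathbb{R}_+\times\Omega)$, $Y''(\tau)$ denotes $(t,\omega)\mapsto Y''(\tau(\omega),t,\omega)$. A $\mathbb{G}$-optional process $Y$ satisfies the optional splitting formula on a $\mathbb{G}$-optional set $A$ if there exist $Y'\in\mathcal{O}(\mathbb{F})$ and a $\mathcal{B}[0,\infty]\otimes\mathcal{O}(\mathbb{F})$-measurable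 $Y''$ with $Y\mathbf{1}_A=(Y'\mathbf{1}_{[0,\tau)}+Y''(\tau)\mathbf{1}_{[\tau,\infty)})\mathbf{1}_A$; $\mathcal{L}^o$ is the family of $\mathbb{G}$-optional sets on which every $\mathbb{G}$-optional process satisfies it. For a $\mathbb{G}$-stopping time $T$ and $A\in\mathcal{G}_T$, $T_A=T$ on $A$ and $T_A=\infty$ on $A^c$; $[R]$ denotes the graph $\{(t,\omega)\in\mathbb{R}_+\times\Omega:t=R(\omega)\}$. *)

From HB Require Import structures.
From mathcomp Require Import all_boot all_order all_algebra.
From mathcomp Require Import all_classical all_reals all_analysis measurable_realfun.
Set Implicit Arguments. Unset Strict Implicit. Unset Printing Implicit Defensive.
Import Order.TTheory GRing.Theory Num.Theory.
Local Open Scope classical_set_scope.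
Local Open Scope ring_scope.
Local Open Scope ereal_scope.

Section Defs.
Context {R : realType} {d : measure_display} {Omega : measurableType d}.

Definition sgen {X : Type} (G : set (set X)) : set (set X) := <<s G >>.

Definition sjoin {X : Type} (G H : set (set X)) : set (set X) := sgen (G `|` H).

Definition sigma_of (f : Omega -> \bar R) : set (set Omega) :=
  [set f @^-1` B | B in [set B : set (\bar R) | measurable B]].

(** time index: a filtration is indexed by t : R, only t >= 0 matters *)
Definition is_filtration (F : R -> set (set Omega)) : Prop :=
  (forall t, (0 <= t)%R -> sigma_algebra setT (F t) /\ F t `<=` measurable) /\
  (forall s t A, (0 <= s)%R -> (s <= t)%R -> F s A -> F t A).

Definition filt_right_continuous (F : R -> set (set Omega)) : Prop :=
  forall t, (0 <= t)%R -> forall A, F t A <-> (forall s, (t < s)%R -> F s A).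

Definition F_infty (F : R -> set (set Omega)) : set (set Omega) :=
  sgen [set A | exists t, (0 <= t)%R /\ F t A].

Definition nullsig (Q : probability Omega R) (T : set (set Omega)) : set (set Omega) :=
  sgen [set B | exists M, T M /\ measurable M /\ Q M = 0 /\ B `<=` M].

Definition Gfilt (Q : probability Omega R) (F : R -> set (set Omega))
  (tau : Omega -> \bar R) (t : R) : set (set Omega) :=
  sjoin (nullsig Q (sjoin (sigma_of tau) (F_infty F)))
        [set A | forall s, (t < s)%R ->
            sjoin (F s) (sigma_of (fun w => mine (tau w) s%:E)) A].

Definition stopping_time (H : R -> set (set Omega)) (T : Omega -> \bar R) : Prop :=
  (forall w, 0 <= T w) /\
  (forall t, (0 <= t)%R -> H t [set w | T w <= t%:E]).

(** stochastic intervals, subsets of R * Omega (only t >= 0 points occur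
    when the bounds are >= 0) *)
Definition sint_co (S T : Omega -> \bar R) : set (R * Omega) :=
  [set p | S p.2 <= p.1%:E < T p.2].
Definition sint_cc (S T : Omega -> \bar R) : set (R * Omega) :=
  [set p | S p.2 <= p.1%:E <= T p.2].
Definition sgraph (T : Omega -> \bar R) : set (R * Omega) :=
  [set p | p.1%:E = T p.2].

Definition optional (H : R -> set (set Omega)) : set (set (R * Omega)) :=
  sgen [set [set p | T p.2 <= p.1%:E] | T in stopping_time H].

Definition meas_wrt {X : Type} (S : set (set X)) (f : X -> R) : Prop :=
  forall B : set R, measurable B -> S (f @^-1` B).

Definition prod_opt (F : R -> set (set Omega)) : set (set (\bar R * (R * Omega))) :=
  sgen [set E | exists (B : set (\bar R)) (C : set (R * Omega)),
        measurable B /\ optional F C /\ E = [set x | B x.1 /\ C x.2]].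

Definition null_wrt (Q : probability Omega R) (T : set (set Omega)) (E : set Omega) : Prop :=
  exists M, T M /\ measurable M /\ Q M = 0 /\ E `<=` M.

Definition splits (Q : probability Omega R) (F : R -> set (set Omega))
  (tau : Omega -> \bar R) (Y : R * Omega -> R) (A : set (R * Omega)) : Prop :=
  exists (Y' : R * Omega -> R) (Y'' : \bar R -> R * Omega -> R),
    meas_wrt (optional F) Y' /\
    meas_wrt (prod_opt F) (fun x => Y'' x.1 x.2) /\
    null_wrt Q (sjoin (sigma_of tau) (F_infty F))
      [set w | exists t, (0 <= t)%R /\ A (t, w) /\
         Y (t, w) <> (if t%:E < tau w then Y' (t, w) else Y'' (tau w) (t, w))].

Definition Lo (Q : probability Omega R) (F : R -> set (set Omega))
  (tau : Omega -> \bar R) (A : set (R * Omega)) : Prop :=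
  optional (Gfilt Q F tau) A /\
  forall Y : R * Omega -> R, meas_wrt (optional (Gfilt Q F tau)) Y ->
    splits Q F tau Y A.

Definition restrict_ST (S T : Omega -> \bar R) : Omega -> \bar R :=
  fun w => if (S w <= T w) && (T w < +oo) then T w else +oo.

End Defs.

From HB Require Import structures.
From mathcomp Require Import all_boot all_order all_algebra.
From mathcomp Require Import all_classical all_reals all_analysis measurable_realfun.
Import Order.TTheory GRing.Theory Num.Theory.
Local Open Scope classical_set_scope.
Local Open Scope ring_scope.

(* Write [S, T] = [S, T) U [T'].  Given splittings Y1 of Y on [S, T), Y2 of Y
   on [T'] and Z of 1_[T'] on [S, T], the process Y1 (1 - Z) + Y2 Z is a
   splitting of Y on [S, T], since 1_[T'] selects the right piece pointwise;
   the exceptional null sets simply add up. *)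

Section GeneratedSigmaAlgebra.
Context {X : Type}.
Implicit Types (G : set (set X)) (A B : set X).

Lemma sgenU G A B : sgen G A -> sgen G B -> sgen G (A `|` B).
Proof.
move=> GA GB; rewrite -bigcup2E; apply: sigma_algebra_bigcup => -[|[|n]] //=.
exact: sigma_algebra0.
Qed.

End GeneratedSigmaAlgebra.

Definition mix {X : Type} {R : pzRingType} (f1 f2 z : X -> R) (x : X) : R :=
  f1 x * (1 - z x) + f2 x * z x.

Lemma mix_indic {X : Type} {R : pzRingType} {f1 f2 z : X -> R} {B : set X} {x : X} :
  z x = \1_B x -> mix f1 f2 z x = if x \in B then f2 x else f1 x.
Proof.
rewrite /mix indicE => ->.
by case: (x \in B); rewrite ?subrr ?subr0 mulr0 mulr1 ?add0r ?addr0.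
Qed.

(* Makes [R * Omega] and [\bar R * (R * Omega)] pointed, as required for
   their generated sigma-algebras to form measurable types. *)
HB.instance Definition _ (R : realType) := isPointed.Build (Real.sort R) 0%R.

Section MeasurableWrt.
Context {R : realType} {X : pointedType} {G : set (set X)}.

Lemma meas_wrt_sgenP (f : X -> R) :
  meas_wrt (sgen G) f <-> measurable_fun (setT : set (g_sigma_algebraType G)) f.
Proof.
split=> [Gf _ B mB|mf B mB]; first by rewrite setTI; exact: Gf.
by have := mf measurableT B mB; rewrite setTI.
Qed.

Lemma meas_wrt_mix (f1 f2 z : X -> R) :
  meas_wrt (sgen G) f1 -> meas_wrt (sgen G) f2 -> meas_wrt (sgen G) z ->
  meas_wrt (sgen G) (mix f1 f2 z).
Proof.
move=> /meas_wrt_sgenP mf1 /meas_wrt_sgenP mf2 /meas_wrt_sgenP mz.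
apply/meas_wrt_sgenP; apply: measurable_funD; apply: measurable_funM => //.
exact: measurable_funB.
Qed.

End MeasurableWrt.

Section NullSets.
Context {R : realType} {d : measure_display} {Omega : measurableType d}.
Context {Q : probability Omega R} {G : set (set Omega)}.

Lemma null_wrtS {E1 E2 : set Omega} :
  E1 `<=` E2 -> null_wrt Q (sgen G) E2 -> null_wrt Q (sgen G) E1.
Proof.
by move=> E12 [M [GM [mM [QM E2M]]]]; exists M; do 3!split => //; exact: subset_trans E2M.
Qed.

Lemma null_wrtU {E1 E2 : set Omega} :
  null_wrt Q (sgen G) E1 -> null_wrt Q (sgen G) E2 ->
  null_wrt Q (sgen G) (E1 `|` E2).
Proof.
move=> [M1 [GM1 [mM1 [QM1 EM1]]]] [M2 [GM2 [mM2 [QM2 EM2]]]].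
exists (M1 `|` M2); split; first exact: sgenU.
split; first exact: measurableU.
by split; [exact: null_set_setU | exact: setUSS].
Qed.

End NullSets.

Section Splitting.
Context {R : realType} {d : measure_display} {Omega : measurableType d}.
Context {Q : probability Omega R} {F : R -> set (set Omega)} {tau : Omega -> \bar R}.

Lemma splits_setU (Y : R * Omega -> R) (A B : set (R * Omega)) :
  splits Q F tau Y A -> splits Q F tau Y B ->
  splits Q F tau \1_B (A `|` B) -> splits Q F tau Y (A `|` B).
Proof.
move=> [Y1' [Y1'' [mY1' [mY1'' N1]]]] [Y2' [Y2'' [mY2' [mY2'' N2]]]].
move=> [Z' [Z'' [mZ' [mZ'' NZ]]]].
exists (mix Y1' Y2' Z'), (fun e => mix (Y1'' e) (Y2'' e) (Z'' e)).
split; first exact: meas_wrt_mix.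
split; first exact: meas_wrt_mix.
apply: (null_wrtS _ (null_wrtU (null_wrtU N1 N2) NZ)) => w [t [t0 [ABtw Ytw]]].
apply: contrapT => /not_orP[/not_orP[nE1 nE2] nEZ]; apply: Ytw.
have split_at (Y0 : R * Omega -> R) Y' Y'' (C : set (R * Omega)) :
    ~ (exists t, 0 <= t /\ C (t, w) /\ Y0 (t, w) <>
         (if (t%:E < tau w)%E then Y' (t, w) else Y'' (tau w) (t, w))) ->
    C (t, w) ->
    Y0 (t, w) = if (t%:E < tau w)%E then Y' (t, w) else Y'' (tau w) (t, w).
  by move=> nE Ctw; apply: contrapT => neq; apply: nE; exists t.
have Ztw := split_at _ _ _ _ nEZ ABtw.
have Y1tw := split_at _ _ _ _ nE1; have Y2tw := split_at _ _ _ _ nE2.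
case: (t%:E < tau w)%E in Ztw Y1tw Y2tw *; rewrite (mix_indic (esym Ztw)).
all: have [Btw|nBtw] := pselect (B (t, w)); first by rewrite mem_set // Y2tw.
all: by rewrite memNset // Y1tw //; case: ABtw.
Qed.

Lemma Lo_setU {A B : set (R * Omega)} :
  Lo Q F tau A -> Lo Q F tau B -> splits Q F tau \1_B (A `|` B) ->
  Lo Q F tau (A `|` B).
Proof.
move=> [optA LA] [optB LB] ZAB; split; first exact: sgenU.
by move=> Y optY; apply: splits_setU; [exact: LA | exact: LB |].
Qed.

End Splitting.

Lemma sint_cc_co_graph {R : realType} {d : measure_display} {Omega : measurableType d}
    (S T : Omega -> \bar R) :
  sint_cc S T = sint_co S T `|` sgraph (restrict_ST S T).
Proof.
apply/seteqP; split => -[t w]; rewrite /sint_cc /sint_co /sgraph /restrict_ST /=.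
- move=> /andP[St]; rewrite le_eqVlt => /orP[/eqP tT|tT]; last by left; rewrite St.
  by right; rewrite -tT St ltry.
- case=> [/andP[St /ltW tT]|]; first by rewrite St.
  by case: ifP => // /andP[ST _] ->; rewrite ST lexx.
Qed.

Local Open Scope ereal_scope.

Theorem mainTheorem8 (R : realType) (d : measure_display) (Omega : measurableType d)
  (Q : probability Omega R) (Filt : R -> set (set Omega)) (tau : Omega -> \bar R) :
  is_filtration Filt -> filt_right_continuous Filt ->
  nullsig Q (F_infty Filt) `<=` Filt 0%R ->
  sigma_of tau `<=` measurable -> (forall w, 0 <= tau w) ->
  forall S T : Omega -> \bar R,
    stopping_time (Gfilt Q Filt tau) S -> stopping_time (Gfilt Q Filt tau) T ->
    Lo Q Filt tau (sint_co S T) ->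
    Lo Q Filt tau (sgraph (restrict_ST S T)) ->
    splits Q Filt tau (\1_(sgraph (restrict_ST S T)) : R * Omega -> R) (sint_cc S T) ->
    Lo Q Filt tau (sint_cc S T).
Proof.
move=> _ _ _ _ _ S T _ _ LoST LoT' splitT'.
by rewrite sint_cc_co_graph in splitT' *; exact: (Lo_setU LoST LoT' splitT').
Qed.
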